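(* For every closed guarded expression $\phi\in\mathcal{E}_0$, every $T$-coalgebra $C=(X,\xi)$ and every state $x\in X$: $x\in[\![\phi]\!]_C$ if and only if $x$ is behaviourally equivalent to $\phi$ regarded as a state of the coalgebra $(\mathcal{E}_0,\varepsilon)$. In particular, $\phi\in[\![\phi]\!]_{(\mathcal{E}_0,\varepsilon)}$ for all $\phi\in\mathcal{E}_0$.
   Context: Standing assumptions: $T:\mathbf{Set}\to\mathbf{Set}$ is a functor; $\mathcal{L}$ is a set of modalities with arities ($L/n$), each $L/n$ assigned an $n$-ary monotone singleton-preserving predicate lifting $[\![L]\!]$ for $T$ such that $\Lambda=\{[\![L]\!]\mid L\in\mathcal{L}\}$ is strongly expressive. (An $n$-ary predicate lifting is a family $\lambda_X:(\mathcal{P}X)^n\to\mathcal{P}(TX)$ with $\lambda_X(f^{-1}[A_1],\dots,f^{-1}[A_n])=(Tf)^{-1}[\lambda_Y(A_1,\dots,A_n)]$ for $f:X\to Y$; monotone if monotone in each argument; singleton-preserving if $|\lambda_X(\{x_1\},\dots,\{x_n\})|=1$ for all $x_i\in X$; $\Lambda$ strongly expressive if for every set $X$ and $t\in TX$ there are $\lambda/n\in\Lambda$, $x_i\in X$ with $\{t\}=\lambda_X(\{x_1\},\dots,\{x_n\})$.) Fix a set $V$ of variables. Expressions: $\phi::=z\mid\nu z.\,\phi\mid L(\phi_1,\dots,\phi_n)$. Closed: every variable occurrence bound by a $\nu$; guarded: every variable occurrence separated from its binding $\nu$ by at least one modality; $\mathcal{E}_0$ = closed guarded expressions. Semantics in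 $C=(X,\xi)$ under valuation $\kappa:V\to\mathcal{P}X$: $[\![z]\!]^\kappa=\kappa(z)$; $[\![L(\phi_1,\dots,\phi_n)]\!]^\kappa=\xi^{-1}[[\![L]\!]_X([\![\phi_1]\!]^\kappa,\dots,[\![\phi_n]\!]^\kappa)]$; $[\![\nu z.\phi]\!]^\kappa=$ greatest fixed point of $Y\mapsto[\![\phi]\!]^{\kappa[z\mapsto Y]}$; for closed $\phi$ write $[\![\phi]\!]_C$. The coalgebra $\varepsilon:\mathcal{E}_0\to T\mathcal{E}_0$ is defined by $\varepsilon(L(\phi_1,\dots,\phi_n))=$ the unique element of $[\![L]\!]_{\mathcal{E}_0}(\{\phi_1\},\dots,\{\phi_n\})$ and $\varepsilon(\nu x.\phi)=\varepsilon(\phi[\nu x.\phi/x])$ (well-defined by induction on the number of $\nu$'s not in the scope of a modality). States are behaviourally equivalent if coalgebra morphisms (maps $h$ with $Th\circ\xi=\zeta\circ h$) into a common coalgebra identify them. *)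

From Stdlib Require Import ClassicalEpsilon.
From mathcomp Require Import all_boot.
Set Implicit Arguments. Unset Strict Implicit. Unset Printing Implicit Defensive.

Definition pred_sub (X : Type) (A B : X -> Prop) : Prop := forall x, A x -> B x.

Definition eqdec (A : Type) (a b : A) : {a = b} + {a <> b} :=
  excluded_middle_informative (a = b).

Record is_functor (T : Type -> Type)
    (fmap : forall X Y : Type, (X -> Y) -> T X -> T Y) : Prop := {
  fmap_id : forall (X : Type) (t : T X), @fmap X X (fun x => x) t = t;
  fmap_comp : forall (X Y Z : Type) (f : X -> Y) (g : Y -> Z) (t : T X),
      @fmap X Z (fun x => g (f x)) t = @fmap Y Z g (@fmap X Y f t) }.

(* lam X : (P X)^n -> P (T X); an n-tuple of subsets is a map 'I_n -> (X -> Prop). *)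
Definition lifting (T : Type -> Type) (n : nat) : Type :=
  forall X : Type, ('I_n -> X -> Prop) -> T X -> Prop.

Section Liftings.
Variables (T : Type -> Type) (fmap : forall X Y : Type, (X -> Y) -> T X -> T Y).

Definition natural_lifting (n : nat) (lam : lifting T n) : Prop :=
  forall (X Y : Type) (f : X -> Y) (A : 'I_n -> Y -> Prop) (t : T X),
    lam X (fun i x => A i (f x)) t <-> lam Y A (@fmap X Y f t).

Definition monotone_lifting (n : nat) (lam : lifting T n) : Prop :=
  forall (X : Type) (A B : 'I_n -> X -> Prop),
    (forall i, pred_sub (A i) (B i)) -> pred_sub (lam X A) (lam X B).

Definition singleton_preserving (n : nat) (lam : lifting T n) : Prop :=
  forall (X : Type) (xs : 'I_n -> X),
    exists! t : T X, lam X (fun i x => x = xs i) t.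

Record is_pred_lifting (n : nat) (lam : lifting T n) : Prop := {
  pl_natural : natural_lifting lam;
  pl_monotone : monotone_lifting lam;
  pl_singleton : singleton_preserving lam }.

Definition strongly_expressive (L : Type) (ar : L -> nat)
    (lift : forall l : L, lifting T (ar l)) : Prop :=
  forall (X : Type) (t : T X),
    exists (l : L) (xs : 'I_(ar l) -> X),
      forall t' : T X, @lift l X (fun i x => x = xs i) t' <-> t' = t.

Definition coalg_morph (X Z : Type) (xi : X -> T X) (zeta : Z -> T Z) (h : X -> Z) : Prop :=
  forall x : X, @fmap X Z h (xi x) = zeta (h x).

Definition beh_equiv (X Y : Type) (xi : X -> T X) (upsilon : Y -> T Y) (x : X) (y : Y) : Prop :=
  exists (Z : Type) (zeta : Z -> T Z) (h : X -> Z) (k : Y -> Z),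
    coalg_morph xi zeta h /\ coalg_morph upsilon zeta k /\ h x = k y.
End Liftings.

Unset Implicit Arguments.
Inductive expr (V L : Type) (ar : L -> nat) : Type :=
| EVar (z : V)
| ENu (z : V) (phi : expr V L ar)
| EMod (l : L) (args : 'I_(ar l) -> expr V L ar).

Set Implicit Arguments.
Arguments EVar {V L ar} z.
Arguments ENu {V L ar} z phi.
Arguments EMod {V L ar} l args.

Section Expressions.
Variables (V L : Type) (ar : L -> nat).

Fixpoint closed_in (bound : V -> Prop) (phi : expr V L ar) : Prop :=
  match phi with
  | EVar z => bound z
  | ENu z psi => closed_in (fun w => w = z \/ bound w) psi
  | EMod l args => forall i, closed_in bound (args i)
  end.
Definition closed (phi : expr V L ar) : Prop := closed_in (fun _ => False) phi.

(* [unguarded] = variables whose binding nu is above the current position with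
   no modality in between; an occurrence of such a variable is not guarded. *)
Fixpoint guarded_in (unguarded : V -> Prop) (phi : expr V L ar) : Prop :=
  match phi with
  | EVar z => ~ unguarded z
  | ENu z psi => guarded_in (fun w => w = z \/ unguarded w) psi
  | EMod l args => forall i, guarded_in (fun _ => False) (args i)
  end.
Definition guarded (phi : expr V L ar) : Prop := guarded_in (fun _ => False) phi.

Definition E0 : Type := {phi : expr V L ar | closed phi /\ guarded phi}.

(* phi[psi/x] : substitution of (closed) psi for free occurrences of x *)
Fixpoint subst (psi : expr V L ar) (x : V) (phi : expr V L ar) : expr V L ar :=
  match phi with
  | EVar z => if eqdec z x then psi else EVar z
  | ENu z chi => if eqdec z x then ENu z chi else ENu z (subst psi x chi)
  | EMod l args => EMod l (fun i => subst psi x (args i))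
  end.

Definition upd (X : Type) (kappa : V -> X -> Prop) (z : V) (Y : X -> Prop) : V -> X -> Prop :=
  fun w => if eqdec w z then Y else kappa w.

Definition gfp (X : Type) (F : (X -> Prop) -> (X -> Prop)) : X -> Prop :=
  fun x => exists Y : X -> Prop, pred_sub Y (F Y) /\ Y x.

Variables (T : Type -> Type) (lift : forall l : L, lifting T (ar l)).

Fixpoint sem (X : Type) (xi : X -> T X) (phi : expr V L ar) (kappa : V -> X -> Prop)
    : X -> Prop :=
  match phi with
  | EVar z => kappa z
  | ENu z psi => gfp (fun Y => sem xi psi (upd kappa z Y))
  | EMod l args => fun x => @lift l X (fun i => sem xi (args i) kappa) (xi x)
  end.

(* semantics of closed expressions (independent of the valuation; we use the empty one) *)
Definition semC (X : Type) (xi : X -> T X) (phi : expr V L ar) : X -> Prop :=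
  sem xi phi (fun _ _ => False).

(* eps : E0 -> T E0 is the coalgebra of the paper, characterized by its two defining
   equations:
   - eps(L(phi_1..phi_n)) is (the unique element) in [[L]]_{E0}({phi_1},...,{phi_n});
   - eps(nu x. phi) = eps(phi[nu x. phi / x]). *)
Definition is_eps (eps : E0 -> T E0) : Prop :=
  (forall (p : E0) (l : L) (args : 'I_(ar l) -> expr V L ar),
      proj1_sig p = EMod l args ->
      @lift l E0 (fun i (e : E0) => proj1_sig e = args i) (eps p)) /\
  (forall (p q : E0) (z : V) (phi : expr V L ar),
      proj1_sig p = ENu z phi ->
      proj1_sig q = subst (ENu z phi) z phi ->
      eps p = eps q).
End Expressions.

(* Every closed guarded formula unfolds, by finitely many nu-unfoldings, to a modal
   formula L(psi_1, ..., psi_n), and unfolding preserves both the semantics and eps.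
   If x satisfies L(psi) then xi(x) lies in [[L]]([[psi_1]], ..., [[psi_n]]); so for any
   maps g1, g2 identifying every state satisfying psi_i with psi_i, both T g1 (xi x) and
   T g2 (eps phi) lie in the singleton [[L]]({g2 psi_1}, ..., {g2 psi_n}) and coincide.
   Hence the quotient of X + E0 by the equivalence generated by "x satisfies phi" carries
   a coalgebra structure for which both injections are morphisms.  Conversely, the
   semantics is invariant under coalgebra morphisms, so it suffices that phi satisfies
   phi in (E0, eps); for phi = nu z. psi this holds because the states with the same
   eps-value as phi form a post-fixed point. *)

From Stdlib Require Import ClassicalEpsilon FunctionalExtensionality PropExtensionality.
From Stdlib Require Import ProofIrrelevance Relation_Operators.
From mathcomp Require Import all_boot.
Set Implicit Arguments. Unset Strict Implicit.

Lemma proj1_sig_inj (A : Type) (P : A -> Prop) : injective (@proj1_sig A P).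
Proof. exact: eq_sig_hprop (fun x => proof_irrelevance (P x)). Qed.

Section Syntax.
Variables (V L : Type) (ar : L -> nat).
Notation formula := (expr V L ar).

Lemma closed_in_mono (phi : formula) (B B' : V -> Prop) :
  (forall w, B w -> B' w) -> closed_in B phi -> closed_in B' phi.
Proof.
elim: phi B B' => [z|z psi IH|l a IH] B B' sBB' /=.
- exact: sBB'.
- by apply: IH => w [->|/sBB']; [left|right].
- by move=> Ba i; apply: IH (Ba i).
Qed.

Lemma guarded_in_anti (phi : formula) (U U' : V -> Prop) :
  (forall w, U' w -> U w) -> guarded_in U phi -> guarded_in U' phi.
Proof.
elim: phi U U' => [z|z psi IH|l a IH] U U' sU'U //=.
- by move=> nUz /sU'U.
- by apply: IH => w [->|/sU'U]; [left|right].
Qed.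

Lemma guarded_in_closed_in (psi : formula) (B U U' : V -> Prop) :
  (forall w, U' w -> U w \/ ~ B w) ->
  closed_in B psi -> guarded_in U psi -> guarded_in U' psi.
Proof.
elim: psi B U U' => [z|z psi IH|l a IH] B U U' hU //=.
- by move=> Bz nUz /hU [].
- apply: IH => w [->|/hU [Uw|nBw]]; [by left; left|by left; right|].
  case: (eqdec w z) => [->|nwz]; first by left; left.
  by right; case.
Qed.

Lemma guarded_in_closed (psi : formula) (U : V -> Prop) :
  closed psi -> guarded psi -> guarded_in U psi.
Proof. by apply: guarded_in_closed_in => w _; right. Qed.

Lemma guarded_in_subst (psi : formula) (z : V) (phi : formula) (U : V -> Prop) :
  closed psi -> guarded psi -> guarded_in U phi -> guarded_in U (subst psi z phi).
Proof.
move=> cpsi gpsi; elim: phi U => [w|w chi IH|l a IH] U /=.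
- by case: (eqdec w z) => //= _ _; apply: guarded_in_closed.
- by case: (eqdec w z) => //= _; apply: IH.
- by move=> ga i; apply: IH.
Qed.

Lemma closed_in_subst (psi : formula) (z : V) (phi : formula) (B B' : V -> Prop) :
  closed psi -> (forall w, B w -> w = z \/ B' w) ->
  closed_in B phi -> closed_in B' (subst psi z phi).
Proof.
move=> cpsi; elim: phi B B' => [w|w chi IH|l a IH] B B' hB /=.
- case: (eqdec w z) => [_ _|nwz /hB []] //=.
  by apply: closed_in_mono cpsi => ? [].
- case: (eqdec w z) => [wz|nwz] /=.
  + by rewrite wz; apply: closed_in_mono => u [->|/hB [->|]]; auto.
  + by apply: IH => u [->|/hB [->|]]; auto.
- by move=> Ba i; apply: IH (Ba i).
Qed.

Lemma closed_unfold (z : V) (phi : formula) :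
  closed (ENu z phi) -> closed (subst (ENu z phi) z phi).
Proof.
move=> c; apply: (closed_in_subst (B := fun w => w = z \/ False) c _ c).
by move=> w [->|[]]; left.
Qed.

Lemma closed_guarded_unfold (z : V) (phi : formula) :
  closed (ENu z phi) -> guarded (ENu z phi) ->
  closed (subst (ENu z phi) z phi) /\ guarded (subst (ENu z phi) z phi).
Proof.
move=> c g; split; first exact: closed_unfold.
have := guarded_in_subst (U := fun w => w = z \/ False) z c g g.
by apply: guarded_in_anti => w [].
Qed.

Fixpoint nu_depth (phi : formula) : nat :=
  if phi is ENu _ psi then (nu_depth psi).+1 else 0.

Lemma nu_depth_subst (psi : formula) (z : V) (phi : formula) (U : V -> Prop) :
  U z -> guarded_in U phi -> nu_depth (subst psi z phi) = nu_depth phi.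
Proof.
elim: phi U => [w|w chi IH|l a IH] U Uz //=.
- by case: (eqdec w z) => //= ->.
- by case: (eqdec w z) => //= _ g; rewrite (IH _ _ g) //; right.
Qed.

Inductive unfolds : formula -> formula -> Prop :=
| unfolds_mod l a : unfolds (EMod l a) (EMod l a)
| unfolds_nu z phi h : unfolds (subst (ENu z phi) z phi) h -> unfolds (ENu z phi) h.

Lemma unfolds_det (e h1 h2 : formula) : unfolds e h1 -> unfolds e h2 -> h1 = h2.
Proof.
move=> u1; elim: u1 h2 => [l a|z phi h _ IH] h2.
- by move Ee: (EMod l a) => e0 u2; case: e0 h2 / u2 Ee.
- move Ee: (ENu z phi) => e0 u2; case: e0 h2 / u2 Ee => // z' phi' h' u' [Ez Ephi].
  by apply: IH; rewrite Ez Ephi.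
Qed.

Lemma unfolds_closed_guarded (e h : formula) :
  unfolds e h -> closed e -> guarded e -> closed h /\ guarded h.
Proof.
elim=> [//|z phi h' _ IH] c g.
by have [c' g'] := closed_guarded_unfold c g; apply: IH.
Qed.

(* Guardedness keeps the unfolded variable out of the leading nu-prefix, so each
   unfolding lowers [nu_depth]. *)
Lemma unfolds_exists (e : formula) :
  closed e -> guarded e -> exists l (a : 'I_(ar l) -> formula), unfolds e (EMod l a).
Proof.
move En: (nu_depth e) => n; elim: n e En => [|n IH] [z|z phi|l a] //=;
  try by [case | exists l, a; constructor].
move=> [En] c g; have [c' g'] := closed_guarded_unfold c g.
have [|l [a u]] := IH _ _ c' g'; last by exists l, a; constructor.
by rewrite (nu_depth_subst _ (U := fun w => w = z \/ False) _ g) //; left.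
Qed.

End Syntax.

Lemma gfp_fixpoint (X : Type) (F : (X -> Prop) -> X -> Prop) :
  (forall A B, pred_sub A B -> pred_sub (F A) (F B)) -> gfp F = F (gfp F).
Proof.
move=> monoF; have postF : pred_sub (gfp F) (F (gfp F)).
  move=> x [Y [postY Yx]]; apply: monoF (postY x Yx) => y Yy; by exists Y.
apply: functional_extensionality => x; apply: propositional_extensionality.
split=> [/postF //|Fx]; exists (F (gfp F)); split=> //.
by apply: monoF.
Qed.

Section Semantics.
Variables (T : Type -> Type) (fmap : forall X Y : Type, (X -> Y) -> T X -> T Y).
Unset Implicit Arguments.
Variables (V L : Type) (ar : L -> nat) (lift : forall l : L, lifting T (ar l)).
Set Implicit Arguments.
Hypothesis lift_pl : forall l : L, is_pred_lifting fmap (lift l).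
Notation formula := (expr V L ar).

Lemma sem_monotone (X : Type) (xi : X -> T X) (phi : formula) (kappa kappa' : V -> X -> Prop) :
  (forall z, pred_sub (kappa z) (kappa' z)) ->
  pred_sub (sem lift xi phi kappa) (sem lift xi phi kappa').
Proof.
elim: phi kappa kappa' => [z|z psi IH|l a IH] k k' kk' /=.
- exact: kk'.
- move=> x [Y [postY Yx]]; exists Y; split=> // y /postY; apply: IH => w.
  by rewrite /upd; case: (eqdec w z) => [_|_] //=; apply: kk'.
- by move=> x; apply: (pl_monotone (lift_pl l)) => i; apply: IH.
Qed.

Lemma sem_ext_closed_in (X : Type) (xi : X -> T X) (phi : formula) (B : V -> Prop)
    (kappa kappa' : V -> X -> Prop) :
  (forall w, B w -> kappa w = kappa' w) -> closed_in B phi ->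
  sem lift xi phi kappa = sem lift xi phi kappa'.
Proof.
elim: phi B kappa kappa' => [z|z psi IH|l a IH] B k k' kk' /=.
- exact: kk'.
- move=> c; congr gfp; apply: functional_extensionality => Y.
  apply: IH c => w; rewrite /upd; case: (eqdec w z) => [_|nwz] //= [//|/kk' //].
- move=> c; apply: functional_extensionality => x; congr (lift _ _ _ _).
  by apply: functional_extensionality => i; apply: IH (c i).
Qed.

Lemma sem_subst (X : Type) (xi : X -> T X) (psi : formula) (z : V) (phi : formula)
    (kappa : V -> X -> Prop) :
  closed psi ->
  sem lift xi (subst psi z phi) kappa = sem lift xi phi (upd kappa z (sem lift xi psi kappa)).
Proof.
move=> cpsi; elim: phi kappa => [w|w chi IH|l a IH] k /=.
- by rewrite /upd; case: (eqdec w z).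
- case: (eqdec w z) => [wz|nwz] /=.
  + congr gfp; apply: functional_extensionality => Y; congr (sem _ _ _).
    by apply: functional_extensionality => u; rewrite /upd wz; case: (eqdec u z).
  + congr gfp; apply: functional_extensionality => Y; rewrite IH.
    rewrite (sem_ext_closed_in xi (kappa' := k) _ cpsi) //; congr (sem _ _ _).
    apply: functional_extensionality => u; rewrite /upd.
    by case: (eqdec u z) => [uz|nuz]; case: (eqdec u w) => [uw|nuw] //=; congruence.
- apply: functional_extensionality => x; congr (lift _ _ _ _).
  by apply: functional_extensionality => i; apply: IH.
Qed.

Lemma semC_nu_unfold (X : Type) (xi : X -> T X) (z : V) (phi : formula) :
  closed (ENu z phi) -> semC lift xi (ENu z phi) = semC lift xi (subst (ENu z phi) z phi).
Proof.
move=> c; rewrite /semC sem_subst //.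
apply: (gfp_fixpoint (F := fun Y => sem lift xi phi (upd (fun _ _ => False) z Y))) => A B sAB.
by apply: sem_monotone => w; rewrite /upd; case: (eqdec w z) => [_|_] //=.
Qed.

Lemma semC_unfolds (X : Type) (xi : X -> T X) (e h : formula) :
  unfolds e h -> closed e -> semC lift xi e = semC lift xi h.
Proof.
elim=> [//|z phi h' _ IH] c.
by rewrite semC_nu_unfold // IH //; apply: closed_unfold.
Qed.

Lemma sem_coalg_morph (X Z : Type) (xi : X -> T X) (zeta : Z -> T Z) (h : X -> Z)
    (phi : formula) (kappa : V -> X -> Prop) (kappa' : V -> Z -> Prop) :
  coalg_morph fmap xi zeta h -> (forall z x, kappa z x <-> kappa' z (h x)) ->
  forall x, sem lift xi phi kappa x <-> sem lift zeta phi kappa' (h x).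
Proof.
move=> hmorph; elim: phi kappa kappa' => [z|z psi IH|l a IH] k k' kk' x /=.
- exact: kk'.
- split=> [[Y [postY Yx]]|[Y' [postY' Y'hx]]].
  + pose hY z' := exists y, Y y /\ h y = z'.
    exists hY; split; last by exists x.
    move=> _ [y [Yy <-]]; apply/(IH (upd k z (fun y => hY (h y)))).
      by move=> w u; rewrite /upd; case: (eqdec w z) => [_|_] //=; apply: kk'.
    apply: sem_monotone (postY y Yy) => w; rewrite /upd.
    by case: (eqdec w z) => [_|_] //= u Yu; exists u.
  + exists (fun y => Y' (h y)); split=> // y Y'hy.
    apply/(IH _ (upd k' z Y')) => [w u|]; last exact: postY'.
    by rewrite /upd; case: (eqdec w z) => [_|_] //=; apply: kk'.
- have -> : (fun i => sem lift xi (a i) k) = (fun i y => sem lift zeta (a i) k' (h y)).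
    apply: functional_extensionality => i; apply: functional_extensionality => y.
    by apply: propositional_extensionality; apply: IH.
  by rewrite -hmorph; apply: (pl_natural (lift_pl l)).
Qed.

Lemma semC_beh_equiv (X Y : Type) (xi : X -> T X) (upsilon : Y -> T Y) (phi : formula) x y :
  beh_equiv fmap xi upsilon x y -> semC lift xi phi x <-> semC lift upsilon phi y.
Proof.
move=> [Z [zeta [h [k [hmorph [kmorph hk]]]]]].
have hx := sem_coalg_morph phi (kappa' := fun _ _ => False) hmorph (fun _ _ => iff_refl _) x.
have hy := sem_coalg_morph phi (kappa' := fun _ _ => False) kmorph (fun _ _ => iff_refl _) y.
by rewrite hk in hx; apply: iff_trans hx (iff_sym hy).
Qed.

Definition saturated (X : Type) (xi : X -> T X) (A : X -> Prop) : Prop :=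
  forall x x', xi x = xi x' -> A x -> A x'.

Lemma sem_saturated (X : Type) (xi : X -> T X) (phi : formula) (kappa : V -> X -> Prop) :
  (forall z, saturated xi (kappa z)) -> saturated xi (sem lift xi phi kappa).
Proof.
elim: phi kappa => [z|z psi IH|l a IH] k satk /=.
- exact: satk.
- move=> x x' Ex [Y [postY Yx]].
  pose SY x'' := exists y, Y y /\ xi y = xi x''.
  exists SY; split; last by exists x.
  move=> x'' [y [Yy Eyx]]; apply: (IH (upd k z SY) _ y x'' Eyx).
  + move=> w; rewrite /upd; case: (eqdec w z) => [_|_] //=.
    by move=> u u' Eu [v [Yv Ev]]; exists v; split; last rewrite Ev.
  + apply: sem_monotone (postY y Yy) => w; rewrite /upd.
    by case: (eqdec w z) => [_|_] //= u Yu; exists u.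
- by move=> x x' <-.
Qed.

End Semantics.

Section SingletonLifting.
Variables (T : Type -> Type) (fmap : forall X Y : Type, (X -> Y) -> T X -> T Y).
Unset Implicit Arguments.
Variables (n : nat) (lam : lifting T n).
Set Implicit Arguments.
Hypothesis lam_pl : is_pred_lifting fmap lam.

Lemma fmap_lifting_singleton_eq (X Y Z : Type) (g1 : X -> Z) (g2 : Y -> Z) (zs : 'I_n -> Z)
    (A : 'I_n -> X -> Prop) (B : 'I_n -> Y -> Prop) (t : T X) (s : T Y) :
  (forall i x, A i x -> g1 x = zs i) -> (forall i y, B i y -> g2 y = zs i) ->
  lam X A t -> lam Y B s -> fmap g1 t = fmap g2 s.
Proof.
move=> hA hB At Bs; have [u [_ u_uniq]] := pl_singleton lam_pl zs.
rewrite -(u_uniq (fmap g1 t)) ?(u_uniq (fmap g2 s)) //; apply/(pl_natural lam_pl).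
- by apply: (pl_monotone lam_pl) Bs => i y /hB.
- by apply: (pl_monotone lam_pl) At => i x /hA.
Qed.

End SingletonLifting.

Lemma quotient_exists (S : Type) (R : S -> S -> Prop) :
  exists (Q : Type) (q : S -> Q) (repr : Q -> S),
    (forall s1 s2, q s1 = q s2 <-> clos_refl_sym_trans S R s1 s2) /\ cancel repr q.
Proof.
pose Q := {c : S -> Prop | exists s, c = clos_refl_sym_trans S R s}.
pose q s : Q := exist _ (clos_refl_sym_trans S R s) (ex_intro _ s erefl).
exists Q, q, (fun c : Q => proj1_sig (constructive_indefinite_description _ (proj2_sig c))).
split=> [s1 s2|c]; last first.
  apply: proj1_sig_inj => /=.
  by case: constructive_indefinite_description => s /= ->.
split=> [/(f_equal (fun c : Q => proj1_sig c s2)) /= ->|R12]; first exact: rst_refl.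
apply: proj1_sig_inj; apply: functional_extensionality => s /=.
apply: propositional_extensionality; split=> [R1s|R2s].
- by apply: rst_trans R1s; apply: rst_sym.
- exact: rst_trans R12 R2s.
Qed.

Section BehaviouralEquivalence.
Variables (T : Type -> Type) (fmap : forall X Y : Type, (X -> Y) -> T X -> T Y).
Hypothesis fmapF : is_functor fmap.

Definition fmap_coherent (X Y : Type) (xi : X -> T X) (upsilon : Y -> T Y)
    (R : X -> Y -> Prop) : Prop :=
  forall (Z : Type) (g1 : X -> Z) (g2 : Y -> Z), (forall x y, R x y -> g1 x = g2 y) ->
  forall x y, R x y -> fmap g1 (xi x) = fmap g2 (upsilon y).

(* Coherence is exactly what makes the coalgebra structure on the quotient of X + Y by
   the equivalence generated by R well defined. *)
Lemma beh_equiv_fmap_coherent (X Y : Type) (xi : X -> T X) (upsilon : Y -> T Y)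
    (R : X -> Y -> Prop) x y :
  fmap_coherent xi upsilon R -> R x y -> beh_equiv fmap xi upsilon x y.
Proof.
move=> cohR Rxy.
pose Rs (s1 s2 : X + Y) := if (s1, s2) is (inl x, inr y) then R x y else False.
have [Q [q [repr [qP reprK]]]] := quotient_exists Rs.
pose g (s : X + Y) := match s with inl x => fmap inl (xi x) | inr y => fmap inr (upsilon y) end.
have gq_compat s1 s2 : clos_refl_sym_trans _ Rs s1 s2 -> fmap q (g s1) = fmap q (g s2).
  elim=> [[x1|y1] [x2|y2] //= R12| //|_ _ _ ->|_ _ _ _ -> _ ->] //.
  rewrite -!(fmap_comp fmapF); apply: cohR R12 => x' y' Rxy'.
  by apply/qP; apply: rst_step.
pose zeta (c : Q) := fmap q (g (repr c)).
have zeta_q s : zeta (q s) = fmap q (g s) by apply/gq_compat/qP; rewrite reprK.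
exists Q, zeta, (fun x => q (inl x)), (fun y => q (inr y)); split; [|split].
- by move=> x'; rewrite zeta_q -(fmap_comp fmapF).
- by move=> y'; rewrite zeta_q -(fmap_comp fmapF).
- by apply/qP; apply: rst_step.
Qed.

End BehaviouralEquivalence.

Section SimultaneousSubstitution.
Variables (V L : Type) (ar : L -> nat).
Notation formula := (expr V L ar).

Definition env_del (rho : V -> option formula) (z : V) : V -> option formula :=
  fun w => if eqdec w z then None else rho w.

Definition env_set (rho : V -> option formula) (z : V) (c : formula) : V -> option formula :=
  fun w => if eqdec w z then Some c else rho w.

Fixpoint ssubst (rho : V -> option formula) (phi : formula) : formula :=
  match phi with
  | EVar z => if rho z is Some c then c else EVar z
  | ENu z psi => ENu z (ssubst (env_del rho z) psi)
  | EMod l a => EMod l (fun i => ssubst rho (a i))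
  end.

Lemma subst_closed_in (c : formula) (z : V) (d : formula) (B : V -> Prop) :
  ~ B z -> closed_in B d -> subst c z d = d.
Proof.
elim: d B => [w|w chi IH|l a IH] B nBz /=.
- by case: (eqdec w z) => [wz Bw|//]; case: nBz; rewrite -wz.
- case: (eqdec w z) => [//|nwz] c_chi /=; congr ENu.
  by apply: IH c_chi => -[zw|/nBz]; first exact: nwz (esym zw).
- by move=> c_a; congr (EMod l _); apply: functional_extensionality => i; apply: IH (c_a i).
Qed.

Lemma subst_ssubst (c : formula) (z : V) (psi : formula) (rho : V -> option formula) :
  (forall w d, rho w = Some d -> closed d) ->
  subst c z (ssubst (env_del rho z) psi) = ssubst (env_set rho z c) psi.
Proof.
elim: psi rho => [w|w chi IH|l a IH] rho rho_closed /=.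
- rewrite /env_del /env_set; case: (eqdec w z) => [wz|nwz] /=.
  + by case: (eqdec w z).
  + case Erho: (rho w) => [d|] /=; last by case: (eqdec w z).
    exact: (@subst_closed_in c z d (fun _ => False) id (rho_closed w d Erho)).
- case: (eqdec w z) => [wz|nwz] /=.
  + congr (ENu w (ssubst _ chi)); apply: functional_extensionality => u.
    by rewrite /env_del /env_set wz; case: (eqdec u z).
  + have -> : env_del (env_del rho z) w = env_del (env_del rho w) z.
      apply: functional_extensionality => u; rewrite /env_del.
      by case: (eqdec u z) => ?; case: (eqdec u w) => ?.
    rewrite IH; last first.
      by move=> u d; rewrite /env_del; case: (eqdec u w) => [//|?]; apply: rho_closed.
    congr (ENu w (ssubst _ chi)); apply: functional_extensionality => u.
    rewrite /env_del /env_set.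
    by case: (eqdec u z) => [uz|nuz]; case: (eqdec u w) => [uw|nuw] //=; congruence.
- by congr (EMod l _); apply: functional_extensionality => i; apply: IH.
Qed.

Lemma ssubst_none (rho : V -> option formula) (phi : formula) :
  (forall z, rho z = None) -> ssubst rho phi = phi.
Proof.
elim: phi rho => [w|w chi IH|l a IH] rho rho0 /=.
- by rewrite rho0.
- by rewrite IH // => u; rewrite /env_del; case: (eqdec u w) => ? //=.
- by congr (EMod l _); apply: functional_extensionality => i; apply: IH.
Qed.

End SimultaneousSubstitution.

Section FormulaCoalgebra.
Variables (T : Type -> Type) (fmap : forall X Y : Type, (X -> Y) -> T X -> T Y).
Unset Implicit Arguments.
Variables (V L : Type) (ar : L -> nat) (lift : forall l : L, lifting T (ar l)).
Set Implicit Arguments.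
Hypothesis lift_pl : forall l : L, is_pred_lifting fmap (lift l).
Notation formula := (expr V L ar).
Notation E := (E0 V ar).

Definition modal_image (h : formula) (t : T E) : Prop :=
  if h is EMod l a then lift l E (fun i e => proj1_sig e = a i) t else False.

Definition mod_args (l : L) (a : 'I_(ar l) -> formula)
    (c : closed (EMod l a)) (g : guarded (EMod l a)) : 'I_(ar l) -> E :=
  fun i => exist _ (a i) (conj (c i) (g i)).

Lemma modal_image_mod_args (l : L) (a : 'I_(ar l) -> formula)
    (c : closed (EMod l a)) (g : guarded (EMod l a)) (t : T E) :
  modal_image (EMod l a) t <-> lift l E (fun i e => e = mod_args c g i) t.
Proof.
split; apply: (pl_monotone (lift_pl l)) => i e /=; last by move->.
by move=> ea; apply: proj1_sig_inj.
Qed.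

Lemma modal_image_exists (l : L) (a : 'I_(ar l) -> formula) :
  closed (EMod l a) -> guarded (EMod l a) -> exists t, modal_image (EMod l a) t.
Proof.
move=> c g; have [t [mt _]] := pl_singleton (lift_pl l) (mod_args c g).
by exists t; apply/(modal_image_mod_args c g).
Qed.

Lemma modal_image_unique (h : formula) (t1 t2 : T E) :
  closed h -> guarded h -> modal_image h t1 -> modal_image h t2 -> t1 = t2.
Proof.
case: h => [//|//|l a] c g /(modal_image_mod_args c g) m1 /(modal_image_mod_args c g) m2.
have [t [_ t_uniq]] := pl_singleton (lift_pl l) (mod_args c g).
by rewrite -(t_uniq t1 m1) (t_uniq t2 m2).
Qed.

Lemma modal_image_unfolds (eps : E -> T E) (p : E) (h : formula) :
  is_eps lift eps -> unfolds (proj1_sig p) h -> modal_image h (eps p).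
Proof.
move=> [eps_mod eps_nu]; move Ep: (proj1_sig p) => e u.
elim: u p Ep => [l a|z phi h' _ IH] p Ep; first exact: eps_mod.
have [c g] := proj2_sig p; rewrite Ep in c g.
by rewrite (eps_nu p (exist _ _ (closed_guarded_unfold c g)) z phi Ep erefl); apply: IH.
Qed.

Definition eps_spec (p : E) (t : T E) : Prop :=
  exists h, unfolds (proj1_sig p) h /\ modal_image h t.

Lemma eps_spec_exists (p : E) : exists t, eps_spec p t.
Proof.
have [c g] := proj2_sig p; have [l [a u]] := unfolds_exists c g.
have [c' g'] := unfolds_closed_guarded u c g.
by have [t mt] := modal_image_exists c' g'; exists t, (EMod l a).
Qed.

Lemma eps_spec_unique (p : E) (t1 t2 : T E) : eps_spec p t1 -> eps_spec p t2 -> t1 = t2.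
Proof.
have [c g] := proj2_sig p; move=> [h1 [u1 m1]] [h2 [u2 m2]].
have [c' g'] := unfolds_closed_guarded u1 c g.
by rewrite (unfolds_det u2 u1) in m2; apply: modal_image_unique c' g' m1 m2.
Qed.

Definition eps_canonical (p : E) : T E :=
  proj1_sig (constructive_indefinite_description _ (eps_spec_exists p)).

Lemma eps_canonical_spec (p : E) : eps_spec p (eps_canonical p).
Proof. exact: proj2_sig (constructive_indefinite_description _ (eps_spec_exists p)). Qed.

Lemma is_eps_canonical : is_eps lift eps_canonical.
Proof.
split=> [p l a pE|p q z phi pE qE].
- have [h [u m]] := eps_canonical_spec p; rewrite pE in u.
  by rewrite (unfolds_det u (unfolds_mod a)) in m.
- apply: (@eps_spec_unique p); first exact: eps_canonical_spec.
  have [h [u m]] := eps_canonical_spec q.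
  by exists h; split=> //; rewrite pE; constructor; rewrite -qE.
Qed.

(* [rho] instantiates the free variables of a subformula by their enclosing
   nu-formulas; at a nu-formula p, the states with the same eps-value as p form a
   post-fixed point. *)
Lemma sem_eps_ssubst (eps : E -> T E) (phi : formula) (rho : V -> option formula)
    (kappa : V -> E -> Prop) (p : E) :
  is_eps lift eps ->
  (forall z d, rho z = Some d -> closed d /\ forall q : E, proj1_sig q = d -> kappa z q) ->
  (forall z, saturated eps (kappa z)) ->
  proj1_sig p = ssubst rho phi -> sem lift eps phi kappa p.
Proof.
move=> eps_is; elim: phi rho kappa p => [z|z psi IH|l a IH] rho k p rhoP satk /= pE.
- move: pE; case Erho: (rho z) => [d|] pE; first exact: (rhoP z d Erho).2.
  by have [c _] := proj2_sig p; rewrite pE in c.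
- set psi' := ssubst (env_del rho z) psi in pE.
  have [c g] := proj2_sig p; rewrite pE in c g.
  pose q : E := exist _ _ (closed_guarded_unfold c g).
  have Epq : eps p = eps q := eps_is.2 p q z psi' pE erefl.
  pose Y e := eps e = eps p.
  have satY w : saturated eps (upd k z Y w).
    by rewrite /upd; case: (eqdec w z) => [_|_] //= e e' Ee; rewrite /Y Ee.
  exists Y; split=> // e Ye; apply: (sem_saturated lift_pl satY (x := q)); first by rewrite Ye Epq.
  apply: (IH (env_set rho z (ENu z psi'))) => //.
    move=> w d; rewrite /env_set /upd; case: (eqdec w z) => [wz|nwz] /=; last exact: rhoP.
    move=> [<-]; split=> // q' q'E.
    by rewrite /Y; congr (eps _); apply: proj1_sig_inj; rewrite q'E pE.
  by rewrite /= subst_ssubst // => w d /rhoP [].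
- apply: (pl_monotone (lift_pl l)) (eps_is.1 p l (fun i => ssubst rho (a i)) pE) => i e eE.
  exact: IH eE.
Qed.

Lemma sem_eps_self (eps : E -> T E) :
  is_eps lift eps -> forall phi : E, semC lift eps (proj1_sig phi) phi.
Proof.
move=> eps_is phi; apply: (sem_eps_ssubst (rho := fun _ => None)) => //.
- by move=> _ x x' _.
- by rewrite ssubst_none.
Qed.

Lemma semC_fmap_coherent (eps : E -> T E) (X : Type) (xi : X -> T X) :
  is_eps lift eps ->
  fmap_coherent fmap xi eps (fun x (e : E) => semC lift xi (proj1_sig e) x).
Proof.
move=> eps_is Z g1 g2 g12 x e xe; have [c g] := proj2_sig e.
have [l [a u]] := unfolds_exists c g; have [c' g'] := unfolds_closed_guarded u c g.
rewrite (semC_unfolds lift_pl xi u c) in xe.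
apply: (fmap_lifting_singleton_eq (lift_pl l) (zs := fun i => g2 (mod_args c' g' i)))
  xe (modal_image_unfolds eps_is u).
- by move=> i y ya; apply: (g12 y (mod_args c' g' i) ya).
- by move=> i e' e'E; congr g2; apply: proj1_sig_inj.
Qed.

End FormulaCoalgebra.

Theorem mainTheorem16
  (T : Type -> Type) (fmap : forall X Y : Type, (X -> Y) -> T X -> T Y)
  (HT : is_functor fmap)
  (L : Type) (ar : L -> nat) (lift : forall l : L, lifting T (ar l))
  (Hlift : forall l : L, is_pred_lifting fmap (lift l))
  (Hexpr : strongly_expressive lift)
  (V : Type) :
  (exists eps : E0 V ar -> T (E0 V ar), is_eps lift eps) /\
  (forall eps : E0 V ar -> T (E0 V ar), is_eps lift eps ->
     (forall (phi : E0 V ar) (X : Type) (xi : X -> T X) (x : X),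
        semC lift xi (proj1_sig phi) x <-> beh_equiv fmap xi eps x phi) /\
     (forall phi : E0 V ar, semC lift eps (proj1_sig phi) phi)).
Proof.
split; first by exists (eps_canonical Hlift); apply: is_eps_canonical.
move=> eps eps_is; have eps_self := sem_eps_self Hlift eps_is.
split=> // phi X xi x; split.
- exact/(beh_equiv_fmap_coherent HT (semC_fmap_coherent Hlift eps_is)).
- by move=> xphi; apply/(semC_beh_equiv Hlift _ xphi).
Qed.
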